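(* Let $k\ge2$ and let $A=\{a_1,\dots,a_n\}$ be a sorted multiset of positive integers ($a_1\le\dots\le a_n$) forming a $k$-PART instance. Then there exists a perfect $p$ for $A$ such that, with $Q=\sum_{i=1}^pa_i$ and $q=\max\{i:a_i\le Q\}$, the $k$-PART$_R$ instance $(A,p)$ has an optimal solution $(S_1,\dots,S_k)$ satisfying: (1) every set $S_i$ containing only elements $j\le q$ satisfies $\Sigma(S_i,A)<2Q$; (2) every element $j>q$ is contained in a singleton set of the solution.
   Context: $[n]=\{1,\dots,n\}$; elements of sets are indices. $\Sigma(S,A)=\sum_{i\in S}a_i$. For pairwise disjoint $S_1,\dots,S_k\subseteq[n]$, $\mathcal{R}(S_1,\dots,S_k,A)=\max_i\Sigma(S_i,A)/\min_i\Sigma(S_i,A)$ if the minimum is positive and $+\infty$ otherwise. $k$-PART: find pairwise disjoint $S_1,\dots,S_k\subseteq[n]$ with $\bigcup_iS_i=[n]$ minimizing $\mathcal{R}$. $k$-PART$_R$ instance $(A,p)$ for $1\le p\le n-k+1$: find pairwise disjoint $S_1,\dots,S_k\subseteq[n]$ with $\bigcup_iS_i=[n]$, $\max(S_1)=p$ and $\max(S_i)>p$ for $1<i\le k$, minimizing $\mathcal{R}$. An integer $p$ with $1\le p\le n-k+1$ is called perfect for $A$ if the optimal ratio of the $k$-PART$_R$ instance $(A,p)$ equals the optimal ratio of the $k$-PART instance $A$. *)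

From HB Require Import structures.
From mathcomp Require Import all_boot all_order all_algebra.
Unset Printing Implicit Defensive.
Import Order.TTheory GRing.Theory Num.Theory.

(* Index j : 'I_n (0-based) stands for the paper's index j+1, value a_{j+1} = nth 0 A j.
   A candidate solution is S : nat -> {set 'I_n}; only S 0, ..., S (k-1) are used,
   S i standing for the paper's S_{i+1}. *)

Definition sigma (A : seq nat) (S : {set 'I_(size A)}) : nat :=
  \sum_(j in S) nth 0 A j.

(* max(S), in 1-based indices; 0 for the empty set *)
Definition setmax n (S : {set 'I_n}) : nat := \max_(j in S) j.+1.

(* extended nonnegative rationals: None = +infinity *)
Definition ext_le (x y : option rat) : bool :=
  match x, y with
  | _, None => true
  | None, Some _ => false
  | Some a, Some b => (a <= b)%R
  end.

Definition ratio (A : seq nat) (k : nat) (S : nat -> {set 'I_(size A)}) : option rat :=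
  let mx := \max_(i < k) sigma A (S i) in
  let mn := \big[minn/sigma A (S 0)]_(i < k) sigma A (S i) in
  if mn == 0 then None else Some ((mx%:R : rat) / mn%:R)%R.

Definition is_kpart (A : seq nat) (k : nat) (S : nat -> {set 'I_(size A)}) : Prop :=
  (forall i j, i < k -> j < k -> i <> j -> [disjoint S i & S j]) /\
  (forall x : 'I_(size A), exists2 i, i < k & x \in S i).

Definition is_kpartR (A : seq nat) (k p : nat) (S : nat -> {set 'I_(size A)}) : Prop :=
  is_kpart A k S /\ setmax (size A) (S 0) = p /\
  (forall i, 0 < i < k -> p < setmax (size A) (S i)).

Definition is_opt_val (A : seq nat) (k : nat)
  (P : (nat -> {set 'I_(size A)}) -> Prop) (v : option rat) : Prop :=
  (exists S, P S /\ ratio A k S = v) /\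
  (forall T, P T -> ext_le v (ratio A k T)).

Definition opt_kpartR (A : seq nat) (k p : nat) (S : nat -> {set 'I_(size A)}) : Prop :=
  is_kpartR A k p S /\ (forall T, is_kpartR A k p T -> ext_le (ratio A k S) (ratio A k T)).

Definition perfect (A : seq nat) (k p : nat) : Prop :=
  1 <= p <= size A - k + 1 /\
  exists v, is_opt_val A k (is_kpartR A k p) v /\ is_opt_val A k (is_kpart A k) v.

Definition Qval (A : seq nat) (p : nat) : nat := \sum_(i < p) nth 0 A i.

(* q = max { i : a_i <= Q } (1-based; 0 if no such i) *)
Definition qval (A : seq nat) (p : nat) : nat :=
  \max_(j < size A | nth 0 A j <= Qval A p) j.+1.

From Pilot Require Import Defs.
From mathcomp Require Import all_boot all_order all_algebra.
From mathcomp Require Import fingroup perm zify.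
Import Order.TTheory GRing.Theory Num.Theory.
(* Again, so that [ratio] means Defs.ratio and not the record of fraction.v. *)
Import Defs.

(* Among the optimal k-partitions (encoded as labelings 'I_n -> 'I_k) choose one
   minimising the sum of the squared block sums and, among those, maximising the
   least block maximum p; let S be the block of maximum p, so Sigma(S) <= Q.
   Moving a set D from a block S_i to S when Sigma(S) + Sigma(D) <= Sigma(S_i)
   keeps the ratio optimal (the two new sums lie between Sigma(S) and Sigma(S_i))
   and lowers the sum of squares by 2 Sigma(D) (Sigma(S_i) - Sigma(S) - Sigma(D)).
   Hence an element j with a_j > Q is alone in its block (otherwise move its
   companions to S), and a block of elements <= q with sum >= 2Q cannot exist (move
   one of its elements x to S); in the only tie, Sigma(S) = a_x = Q forces
   S = {1..p}, and after the move every block has maximum > p, contradicting the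
   choice of p.  The k block maxima are distinct and lie in [p, n], so
   p <= n - k + 1; putting S first gives an optimal solution of k-PART_R(A, p)
   whose ratio is the optimum of k-PART. *)

Lemma ext_le_refl x : ext_le x x.
Proof. by case: x => //= a. Qed.

Lemma ext_le_trans {x y z} : ext_le x y -> ext_le y z -> ext_le x z.
Proof. by case: x; case: y; case: z => //= a b c; apply: le_trans. Qed.

Lemma ext_le_total x y : ext_le x y || ext_le y x.
Proof. by case: x; case: y => //= a b; apply: le_total. Qed.

Lemma exists_ext_le_min {T : finType} (f : T -> option rat) :
  T -> exists x, forall y, ext_le (f x) (f y).
Proof.
move=> x0; suff [x min_x] : exists x, {in enum T, forall y, ext_le (f x) (f y)}.
  by exists x => y; apply: min_x; rewrite mem_enum.
elim: (enum T) => [|y s [x min_x]]; first by exists x0.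
have /orP[le_yx | le_xy] := ext_le_total (f y) (f x).
  exists y => z; rewrite inE => /predU1P[-> | /min_x]; first exact: ext_le_refl.
  exact: ext_le_trans.
by exists x => z; rewrite inE => /predU1P[-> | /min_x].
Qed.

Lemma exists_lexmin {T : finType} (P : pred T) (f g : T -> nat) (x0 : T) :
  P x0 -> exists2 x, P x & forall y, P y -> f x <= f y /\ (f y = f x -> g y <= g x).
Proof.
case/(arg_minnP f) => m Pm min_m.
case: (@arg_maxnP _ m (fun y => P y && (f y == f m)) g) => [|x /andP[Px /eqP fx] max_x].
  by rewrite Pm eqxx.
exists x => // y Py; rewrite fx min_m //; split=> // fy.
by apply: max_x; rewrite Py fy eqxx.
Qed.

Lemma geq_bigmin k x0 (F : nat -> nat) i : i < k -> \big[minn/x0]_(j < k) F j <= F i.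
Proof.
move=> lt_ik; have : Ordinal lt_ik \in index_enum 'I_k by rewrite mem_index_enum.
elim: (index_enum 'I_k) => // j s IHs; rewrite big_cons inE => /predU1P[<- | /IHs].
  exact: geq_minl.
exact: leq_trans (geq_minr _ _).
Qed.

Lemma bigminn_geq k x0 (F : nat -> nat) y :
  y <= x0 -> (forall i, i < k -> y <= F i) -> y <= \big[minn/x0]_(j < k) F j.
Proof.
move=> le_y0 le_yF; elim/big_ind: _ => // [a b | i _]; first by rewrite leq_min => ->.
exact: le_yF.
Qed.

Definition maxsum A k (S : nat -> {set 'I_(size A)}) := \max_(i < k) sigma A (S i).
Definition minsum A k (S : nat -> {set 'I_(size A)}) :=
  \big[minn/sigma A (S 0)]_(i < k) sigma A (S i).

Lemma ratioE A k S : ratio A k S =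
  if minsum A k S == 0 then None else Some ((maxsum A k S)%:R / (minsum A k S)%:R)%R.
Proof. by []. Qed.

Lemma minsum_gt0_ratio A k S : (0 < minsum A k S) = (ratio A k S != None).
Proof. by rewrite ratioE lt0n; case: eqP. Qed.

Lemma minsum_le A k (S : nat -> {set 'I_(size A)}) (c : 'I_k) : minsum A k S <= sigma A (S c).
Proof. exact: (geq_bigmin _ _ (fun i => sigma A (S i))). Qed.

Lemma maxsum_ge A k (S : nat -> {set 'I_(size A)}) (c : 'I_k) : sigma A (S c) <= maxsum A k S.
Proof. exact: (leq_bigmax c). Qed.

Lemma ratio_within A k (S T : nat -> {set 'I_(size A)}) : 0 < k ->
  (forall c : 'I_k, minsum A k S <= sigma A (T c) <= maxsum A k S) ->
  ext_le (ratio A k T) (ratio A k S).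
Proof.
move=> k_gt0 within.
have le_max : maxsum A k T <= maxsum A k S.
  by apply/bigmax_leqP => c _; case/andP: (within c).
have le_min : minsum A k S <= minsum A k T.
  apply: (bigminn_geq _ _ (fun i => sigma A (T i))) => [|c lt_ck].
    by case/andP: (within (Ordinal k_gt0)).
  by case/andP: (within (Ordinal lt_ck)).
rewrite [ratio A k S]ratioE; case: eqP => [_ | /eqP S0]; first by case: ratio.
have T0 : minsum A k T != 0 by rewrite -lt0n (leq_trans _ le_min) // lt0n.
rewrite ratioE (negbTE T0) /= ler_pdivrMr ?ltr0n ?lt0n // mulrAC.
by rewrite ler_pdivlMr ?ltr0n ?lt0n // -!natrM ler_nat leq_mul.
Qed.

Lemma leq_nth_sigma {A} {S : {set 'I_(size A)}} {x} : x \in S -> nth 0 A x <= sigma A S.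
Proof. by move=> Sx; rewrite /sigma (bigD1 x) //= leq_addr. Qed.

Lemma sigma_gt0_mem {A} {S : {set 'I_(size A)}} : 0 < sigma A S -> exists x, x \in S.
Proof.
have [-> | /set0Pn //] := eqVneq S set0.
by rewrite /sigma big_set0.
Qed.

Lemma sigma1 A (x : 'I_(size A)) : sigma A [set x] = nth 0 A x.
Proof. exact: big_set1. Qed.

Lemma sigmaU A (S D : {set 'I_(size A)}) :
  [disjoint S & D] -> sigma A (S :|: D) = sigma A S + sigma A D.
Proof. by move=> SD; rewrite /sigma -bigU //; apply: eq_bigl => x; rewrite !inE. Qed.

Lemma sigmaD A (S D : {set 'I_(size A)}) :
  D \subset S -> sigma A (S :\: D) + sigma A D = sigma A S.
Proof. by move=> DS; rewrite /sigma [in RHS](big_setID D) (setIidPr DS) addnC. Qed.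

Lemma setmax_gt {n} {S : {set 'I_n}} {x} : x \in S -> x < setmax n S.
Proof. exact: (leq_bigmax_cond (F := fun j : 'I_n => j.+1)). Qed.

Lemma setmax_le n (S : {set 'I_n}) m : (forall x : 'I_n, x \in S -> x < m) -> setmax n S <= m.
Proof. by move/bigmax_leqP. Qed.

Lemma setmax_mem {n} {S : {set 'I_n}} : S != set0 -> exists2 w : 'I_n, w \in S & setmax n S = w.+1.
Proof.
case/set0Pn => x Sx; rewrite /setmax (bigop.bigmax_eq_arg x) //.
by case: arg_maxnP => // w Sw _; exists w.
Qed.

Lemma card_inj_interval m (f : 'I_m -> nat) lo hi :
  injective f -> (forall i, lo <= f i <= hi) -> m <= hi.+1 - lo.
Proof.
move=> f_inj f_in; rewrite -[m]size_enum_ord -(size_map f) -(size_iota lo (hi.+1 - lo)).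
apply: uniq_leq_size; first by rewrite map_inj_uniq ?enum_uniq.
move=> _ /mapP[i _ ->]; rewrite mem_iota; have := f_in i; lia.
Qed.

Lemma nth_leq_Qval A m j : j < m -> nth 0 A j <= Qval A m.
Proof. by move=> lt_jm; rewrite /Qval (bigD1 (Ordinal lt_jm)) //= leq_addr. Qed.

Lemma Qval_split A m (S : {set 'I_(size A)}) :
  m <= size A -> (forall j : 'I_(size A), j \in S -> j < m) ->
  Qval A m = sigma A S + \sum_(j : 'I_(size A) | (j < m) && (j \notin S)) nth 0 A j.
Proof.
move=> le_mn S_lt; rewrite /Qval (big_ord_widen _ (fun j => nth 0 A j) le_mn).
rewrite (bigID [in S]) /=; congr (_ + _); apply: eq_bigl => j.
by case: (boolP (j \in S)) => [/S_lt -> | _]; rewrite ?andbT ?andbF.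
Qed.

Lemma sigma_le_Qval A m (S : {set 'I_(size A)}) :
  m <= size A -> (forall j : 'I_(size A), j \in S -> j < m) -> sigma A S <= Qval A m.
Proof. by move=> le_mn S_lt; rewrite (Qval_split _ _ _ le_mn S_lt) leq_addr. Qed.

Lemma Qval_le_sigma_prefix A m (S : {set 'I_(size A)}) :
  (forall j : 'I_(size A), 0 < nth 0 A j) ->
  m <= size A -> (forall j : 'I_(size A), j \in S -> j < m) -> Qval A m <= sigma A S ->
  forall j : 'I_(size A), j < m -> j \in S.
Proof.
move=> A_pos le_mn S_lt; rewrite (Qval_split _ _ _ le_mn S_lt) => le_Q j lt_jm.
apply: contraTT le_Q => Sj; rewrite -ltnNge -[X in X < _]addn0 ltn_add2l.
by rewrite (bigD1 j) ?lt_jm //= ltn_addr.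
Qed.

Lemma ltn_qval {A m} {j : 'I_(size A)} : sorted leq A -> (j < qval A m) = (nth 0 A j <= Qval A m).
Proof.
move=> A_sorted; apply/idP/idP => [lt_jq | le_jQ]; last first.
  exact: (leq_bigmax_cond (F := fun j : 'I_(size A) => j.+1)).
apply: contraTT lt_jq; rewrite -!ltnNge => lt_Qj.
apply/bigmax_leqP => i le_iQ; rewrite ltnNge; apply: contraTN le_iQ => le_ji.
rewrite -ltnNge (leq_trans lt_Qj) //.
by apply: (sorted_leq_nth leq_trans leqnn) => //; rewrite inE.
Qed.

Definition block {n k} (l : {ffun 'I_n -> 'I_k}) (c : nat) : {set 'I_n} :=
  [set x | l x == c :> nat].

Lemma in_block n k (l : {ffun 'I_n -> 'I_k}) c x : (x \in block l c) = (l x == c :> nat).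
Proof. by rewrite inE. Qed.

Lemma disjoint_block {n k} (l : {ffun 'I_n -> 'I_k}) (c1 c2 : nat) :
  c1 != c2 -> [disjoint block l c1 & block l c2].
Proof.
move=> ne_c12; rewrite -setI_eq0; apply/eqP/setP => x; rewrite !inE.
by apply: contraNF ne_c12 => /andP[/eqP <- /eqP ->].
Qed.

Lemma block_kpart A k (l : {ffun 'I_(size A) -> 'I_k}) : is_kpart A k (block l).
Proof.
split=> [i j _ _ /eqP/disjoint_block // | x].
by exists (l x); rewrite ?in_block.
Qed.

Lemma kpart_block {A k} {U : nat -> {set 'I_(size A)}} : 0 < k -> is_kpart A k U ->
  exists l : {ffun 'I_(size A) -> 'I_k}, forall c : 'I_k, block l c = U c.
Proof.
move=> k_gt0 [U_disj U_cover].
exists [ffun x => odflt (Ordinal k_gt0) [pick c : 'I_k | x \in U c]] => c.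
apply/setP => x; rewrite in_block ffunE; case: pickP => [d Ud | noU] /=.
  apply/eqP/idP => [/ord_inj <- // | Uc]; apply/eqP; apply: contraTT isT => ne_dc.
  by rewrite (disjointFr (U_disj d c (ltn_ord d) (ltn_ord c) (elimN eqP ne_dc)) Ud) in Uc.
by have [i lt_ik Ui] := U_cover x; have := noU (Ordinal lt_ik); rewrite Ui.
Qed.

Lemma setmax_block_inj n k (l : {ffun 'I_n -> 'I_k}) :
  (forall c : 'I_k, block l c != set0) -> injective (fun c : 'I_k => setmax n (block l c)).
Proof.
move=> ne0 c1 c2 /=.
have [w1 + ->] := setmax_mem (ne0 c1); have [w2 + ->] := setmax_mem (ne0 c2).
by rewrite !in_block => /eqP l1 /eqP l2 [/ord_inj w12]; apply: ord_inj; rewrite -l1 -l2 w12.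
Qed.

Definition relabel {n k} (s : {perm 'I_k}) (l : {ffun 'I_n -> 'I_k}) : {ffun 'I_n -> 'I_k} :=
  [ffun x => s (l x)].

Lemma block_relabel n k (s : {perm 'I_k}) (l : {ffun 'I_n -> 'I_k}) (c : 'I_k) :
  block (relabel s l) (s c) = block l c.
Proof. by apply/setP => x; rewrite !in_block ffunE !(inj_eq val_inj) (inj_eq perm_inj). Qed.

Definition move_to {n k} (l : {ffun 'I_n -> 'I_k}) (c : 'I_k) (D : {set 'I_n}) :
  {ffun 'I_n -> 'I_k} := [ffun x => if x \in D then c else l x].

Lemma block_move_to {n k} {l : {ffun 'I_n -> 'I_k}} {i0 i : 'I_k} {D : {set 'I_n}} :
  i0 != i -> D \subset block l i ->
  [/\ block (move_to l i0 D) i0 = block l i0 :|: D,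
      block (move_to l i0 D) i = block l i :\: D &
      forall c : 'I_k, c != i0 -> c != i -> block (move_to l i0 D) c = block l c].
Proof.
move=> ne_i0i sub_D.
have l_D x : x \in D -> l x = i by move/(subsetP sub_D); rewrite in_block => /eqP/val_inj.
split=> [||c ne_ci0 ne_ci]; apply/setP => x; rewrite !inE ffunE.
- by case: (x \in D); rewrite ?eqxx ?orbT ?orbF.
- by case: (boolP (x \in D)) => //= /l_D _; rewrite (inj_eq val_inj) (negbTE ne_i0i).
- case: (boolP (x \in D)) => //= /l_D ->.
  by rewrite !(inj_eq val_inj) eq_sym (negbTE ne_ci0) eq_sym (negbTE ne_ci).
Qed.

Definition sqsum A {k} (l : {ffun 'I_(size A) -> 'I_k}) : nat :=
  \sum_(c < k) sigma A (block l c) ^ 2.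

Section MoveToSums.

Context {A : seq nat} {k : nat} {l : {ffun 'I_(size A) -> 'I_k}}.
Context {i0 i : 'I_k} {D : {set 'I_(size A)}}.
Hypotheses (ne_i0i : i0 != i) (sub_D : D \subset block l i).

Lemma sigma_move_to :
  sigma A (block (move_to l i0 D) i0) = sigma A (block l i0) + sigma A D /\
  sigma A (block (move_to l i0 D) i) + sigma A D = sigma A (block l i).
Proof.
have [-> -> _] := block_move_to ne_i0i sub_D; split; last exact: sigmaD.
by apply/sigmaU/(disjointWr sub_D)/disjoint_block; rewrite (inj_eq val_inj).
Qed.

Lemma sqsum_move_to :
  sigma A (block l i0) + sigma A D <= sigma A (block l i) ->
  sqsum A (move_to l i0 D) +
    2 * sigma A D * (sigma A (block l i) - (sigma A (block l i0) + sigma A D)) = sqsum A l.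
Proof.
have [_ _ same] := block_move_to ne_i0i sub_D.
have [sig_i0 sig_i] := sigma_move_to.
rewrite /sqsum (bigD1 i0) // [RHS](bigD1 i0) //= (bigD1 i) 1?eq_sym //=.
rewrite [in RHS](bigD1 i) 1?eq_sym //= sig_i0 -sig_i.
rewrite (eq_bigr (fun c : 'I_k => sigma A (block l c) ^ 2)) => [|c /andP[ne_ci0 ne_ci]].
  2: by rewrite same.
move: (sigma A (block l i0)) (sigma A D) (sigma A (block _ i)) (\sum_(c < k | _) _) => a d b R.
nia.
Qed.

End MoveToSums.

Section LexMinimalLabeling.

Context {A : seq nat} {k : nat}.
Hypothesis k_gt0 : 0 < k.

Local Notation n := (size A).
Local Notation labeling := {ffun 'I_n -> 'I_k}.

Definition least_block (l : labeling) : 'I_k :=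
  [arg min_(c < Ordinal k_gt0) setmax n (block l c)].

Definition least_max (l : labeling) : nat := setmax n (block l (least_block l)).

Lemma least_max_le (l : labeling) (c : 'I_k) : least_max l <= setmax n (block l c).
Proof. by rewrite /least_max /least_block; case: arg_minnP => // c' _; apply. Qed.

Lemma least_max_gt (l l' : labeling) (c0 : 'I_k) m :
  (forall j : 'I_n, j < m -> j \in block l c0) -> block l c0 \proper block l' c0 ->
  (forall c : 'I_k, block l' c != set0) -> m < least_max l'.
Proof.
move=> full /properP[sub_c0 [z l'z lz]] ne0; rewrite /least_max.
set c := least_block l'.
suff [x l'x le_mx] : exists2 x, x \in block l' c & m <= x.
  exact: leq_ltn_trans le_mx (setmax_gt l'x).
have [-> | ne_cc0] := eqVneq c c0.
  by exists z => //; rewrite leqNgt; apply: contra lz => /full.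
have /set0Pn[x l'x] := ne0 c; exists x => //; rewrite leqNgt; apply/negP => /full /(subsetP sub_c0).
by apply/negP; rewrite (disjointFr (disjoint_block l' c c0 ne_cc0) l'x).
Qed.

Lemma exists_lexmin_labeling : exists lab : labeling,
  (forall l : labeling, ext_le (ratio A k (block lab)) (ratio A k (block l))) /\
  (forall l : labeling, ext_le (ratio A k (block l)) (ratio A k (block lab)) ->
     sqsum A lab <= sqsum A l /\ (sqsum A l = sqsum A lab -> least_max l <= least_max lab)).
Proof.
have [lab0 min0] :=
  exists_ext_le_min (fun l : labeling => ratio A k (block l)) [ffun=> Ordinal k_gt0].
have [lab opt_lab lex_lab] := exists_lexmin
  (fun l : labeling => ext_le (ratio A k (block l)) (ratio A k (block lab0)))
  (sqsum A) least_max lab0 (ext_le_refl _).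
exists lab; split=> [l | l le_l]; first exact: ext_le_trans opt_lab (min0 l).
by apply: lex_lab; apply: ext_le_trans le_l opt_lab.
Qed.

Hypothesis k_le_n : k <= n.
Hypothesis A_pos : forall j : 'I_n, 0 < nth 0 A j.

Context {lab : labeling}.
Hypothesis lab_opt : forall l : labeling, ext_le (ratio A k (block lab)) (ratio A k (block l)).
Hypothesis lab_lexmin : forall l : labeling,
  ext_le (ratio A k (block l)) (ratio A k (block lab)) ->
  sqsum A lab <= sqsum A l /\ (sqsum A l = sqsum A lab -> least_max l <= least_max lab).

Local Notation i0 := (least_block lab).
Local Notation p := (least_max lab).

Lemma lab_kpart_opt {U : nat -> {set 'I_n}} :
  is_kpart A k U -> ext_le (ratio A k (block lab)) (ratio A k U).
Proof.
case/(kpart_block k_gt0) => l blk_l; apply: ext_le_trans (lab_opt l) _.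
by apply: ratio_within => // c; rewrite blk_l minsum_le maxsum_ge.
Qed.

Lemma sigma_block_gt0 {l : labeling} :
  ext_le (ratio A k (block l)) (ratio A k (block lab)) -> forall c : 'I_k, 0 < sigma A (block l c).
Proof.
move=> le_l c; apply: leq_trans (minsum_le _ _ _ c).
pose onto : labeling := [ffun x => insubd (Ordinal k_gt0) (val x)].
have onto_gt0 d : d < k -> 0 < sigma A (block onto d).
  move=> lt_dk; have x_in : widen_ord k_le_n (Ordinal lt_dk) \in block onto d.
    by rewrite in_block ffunE val_insubd /= lt_dk.
  exact: leq_trans (A_pos _) (leq_nth_sigma x_in).
have : 0 < minsum A k (block onto).
  by apply: (bigminn_geq _ _ (fun d => sigma A (block onto d))) => //; apply: onto_gt0.
rewrite !minsum_gt0_ratio; move: (ext_le_trans le_l (lab_opt onto)).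
by case: (ratio A k (block l)); case: (ratio A k (block onto)).
Qed.

Lemma sigma_lab_gt0 (c : 'I_k) : 0 < sigma A (block lab c).
Proof. exact: sigma_block_gt0 (ext_le_refl _) c. Qed.

Lemma sigma_least_le_Qval : sigma A (block lab i0) <= Qval A p.
Proof. by apply: sigma_le_Qval => [|x /setmax_gt //]; apply: setmax_le => x _. Qed.

Lemma move_to_opt {i : 'I_k} {D : {set 'I_n}} : i0 != i -> D \subset block lab i ->
  sigma A (block lab i0) + sigma A D <= sigma A (block lab i) ->
  ext_le (ratio A k (block (move_to lab i0 D))) (ratio A k (block lab)).
Proof.
move=> ne_i0i sub_D le_ab.
have [_ _ same] := block_move_to ne_i0i sub_D.
have [sig_i0 sig_i] := sigma_move_to ne_i0i sub_D.
have min_i0 := minsum_le A k (block lab) i0; have max_i := maxsum_ge A k (block lab) i.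
apply: ratio_within => // c; have [-> | ne_ci0] := eqVneq c i0.
  by rewrite sig_i0; apply/andP; split; lia.
have [-> | ne_ci] := eqVneq c i; first by apply/andP; split; lia.
by rewrite same // minsum_le maxsum_ge.
Qed.

Lemma exchange {i : 'I_k} {D : {set 'I_n}} : i0 != i -> D \subset block lab i -> 0 < sigma A D ->
  sigma A (block lab i0) + sigma A D <= sigma A (block lab i) ->
  sigma A (block lab i0) + sigma A D < sigma A (block lab i) \/
    p < least_max (move_to lab i0 D) -> False.
Proof.
move=> ne_i0i sub_D d_gt0 le_ab better.
have [sq_ge tie] := lab_lexmin _ (move_to_opt ne_i0i sub_D le_ab).
have := sqsum_move_to ne_i0i sub_D le_ab.
set gain := 2 * _ * _; case: better => [lt_ab | lt_p] sq_eq.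
  have : 0 < gain by rewrite !muln_gt0 d_gt0 subn_gt0 lt_ab.
  by lia.
have := tie (esym _); lia.
Qed.

Lemma large_singleton (j : 'I_n) : Qval A p < nth 0 A j -> block lab (lab j) = [set j].
Proof.
move=> large_j; set i := lab j.
have j_in : j \in block lab i by rewrite in_block.
have ne_i0i : i0 != i.
  apply: contraTneq large_j => i0_i; rewrite -leqNgt nth_leq_Qval //.
  by apply: setmax_gt; rewrite i0_i.
apply/eqP; rewrite eqEsubset sub1set j_in andbT -setD_eq0.
apply: contraT => /set0Pn[x x_in].
have sub_D : block lab i :\ j \subset block lab i by apply: subD1set.
have d_gt0 := leq_trans (A_pos x) (leq_nth_sigma x_in).
have sum_i : sigma A (block lab i) = nth 0 A j + sigma A (block lab i :\ j) by apply: big_setD1.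
have a_le_Q := sigma_least_le_Qval.
by exfalso; apply: (exchange ne_i0i sub_D d_gt0); [lia | left; lia].
Qed.

Lemma small_block_lt (i : 'I_k) :
  (forall j : 'I_n, j \in block lab i -> nth 0 A j <= Qval A p) ->
  sigma A (block lab i) < 2 * Qval A p.
Proof.
move=> small; rewrite ltnNge; apply/negP => big.
have a_le_Q := sigma_least_le_Qval.
have a_gt0 := sigma_lab_gt0 i0.
have ne_i0i : i0 != i by apply: contraTneq big => <-; rewrite -ltnNge; lia.
have [x x_in] := sigma_gt0_mem (sigma_lab_gt0 i).
have sub_x : [set x] \subset block lab i by rewrite sub1set.
have x_le_Q := small x x_in; have x_gt0 := A_pos x.
have le_ab : sigma A (block lab i0) + sigma A [set x] <= sigma A (block lab i).
  by rewrite sigma1; lia.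
apply: (exchange ne_i0i sub_x _ le_ab); first by rewrite sigma1.
set a := sigma A (block lab i0); set b := sigma A (block lab i).
have [lt_ab | gt_ab | tie] := ltngtP (a + sigma A [set x]) b; first by left.
  by rewrite leqNgt gt_ab in le_ab.
(* The tie forces Sigma(S_i0) = Q, hence S_i0 = [0, p); after moving x there,
   every block contains an index >= p. *)
right; rewrite sigma1 in tie.
have [blk_i0 _ _] := block_move_to ne_i0i sub_x.
apply: (least_max_gt lab _ i0).
- apply: (Qval_le_sigma_prefix _ _ _ A_pos) => [|x' /setmax_gt //|]; last by lia.
  exact: setmax_le.
- rewrite blk_i0; apply: properUl; rewrite sub1set.
  by rewrite (disjointFr (disjoint_block lab i i0 _) x_in) // eq_sym.
- move=> c; apply/set0Pn/sigma_gt0_mem/sigma_block_gt0.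
  exact: move_to_opt ne_i0i sub_x le_ab.
Qed.

Lemma setmax_lab_inj : injective (fun c : 'I_k => setmax n (block lab c)).
Proof.
by apply: setmax_block_inj => c; apply/set0Pn/sigma_gt0_mem/sigma_lab_gt0.
Qed.

Lemma least_max_bounds : 1 <= p <= n - k + 1.
Proof.
have p_ge1 : 0 < p.
  have [x x_in] := sigma_gt0_mem (sigma_lab_gt0 i0).
  exact: leq_ltn_trans (leq0n x) (setmax_gt x_in).
have range (c : 'I_k) : p <= setmax n (block lab c) <= n by rewrite least_max_le; exact: setmax_le.
have := card_inj_interval _ _ p n setmax_lab_inj range; lia.
Qed.

Local Notation swap := (tperm (Ordinal k_gt0) i0).

Lemma block_swap (c : 'I_k) : block (relabel swap lab) c = block lab (swap c).
Proof. by rewrite -{1}(tpermK (Ordinal k_gt0) i0 c) block_relabel. Qed.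

Lemma swap_kpartR : is_kpartR A k p (block (relabel swap lab)).
Proof.
split; first exact: block_kpart.
split=> [|i /andP[i_gt0 lt_ik]]; first by rewrite (block_swap (Ordinal k_gt0)) tpermL.
rewrite (block_swap (Ordinal lt_ik)) ltn_neqAle least_max_le andbT.
apply/eqP => /setmax_lab_inj /(congr1 swap); rewrite tpermK tpermR => /(congr1 val) /= i_eq0.
by rewrite -i_eq0 in i_gt0.
Qed.

Lemma swap_opt (U : nat -> {set 'I_n}) :
  is_kpart A k U -> ext_le (ratio A k (block (relabel swap lab))) (ratio A k U).
Proof.
move=> U_kpart; apply: ext_le_trans _ (lab_kpart_opt U_kpart).
by apply: ratio_within => // c; rewrite block_swap minsum_le maxsum_ge.
Qed.

End LexMinimalLabeling.

Lemma perfect_opt_kpartR {A k p} {S : nat -> {set 'I_(size A)}} :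
  1 <= p <= size A - k + 1 -> is_kpartR A k p S ->
  (forall U, is_kpart A k U -> ext_le (ratio A k S) (ratio A k U)) ->
  perfect A k p /\ opt_kpartR A k p S.
Proof.
move=> p_range S_R S_min.
have S_minR U : is_kpartR A k p U -> ext_le (ratio A k S) (ratio A k U) by case=> /S_min.
do !split => //; exists (ratio A k S).
by do !split => //; exists S; split => //; case: S_R.
Qed.

Theorem theorem18 (k : nat) (A : seq nat) :
  2 <= k -> k <= size A -> sorted leq A -> all (fun a => 0 < a) A ->
  exists p, perfect A k p /\
    exists S : nat -> {set 'I_(size A)}, opt_kpartR A k p S /\
      (forall i, i < k -> (forall j : 'I_(size A), j \in S i -> j.+1 <= qval A p) ->
         sigma A (S i) < 2 * Qval A p) /\
      (forall j : 'I_(size A), qval A p < j.+1 -> exists2 i, i < k & S i = [set j]).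
Proof.
move=> k_ge2 k_le_n A_sorted /(all_nthP 0) A_pos'.
have k_gt0 : 0 < k := ltnW k_ge2.
have A_pos (j : 'I_(size A)) : 0 < nth 0 A j := A_pos' j (ltn_ord j).
have [lab [lab_opt lab_lexmin]] := exists_lexmin_labeling (A := A) k_gt0.
set s := tperm (Ordinal k_gt0) (least_block k_gt0 lab).
have [p_perfect S_opt] := perfect_opt_kpartR (least_max_bounds k_gt0 k_le_n A_pos lab_opt)
  (swap_kpartR k_gt0 k_le_n A_pos lab_opt) (swap_opt k_gt0 lab_opt).
exists (least_max k_gt0 lab); split=> //; exists (block (relabel s lab)).
split=> //; split=> [i lt_ik small | j].
  rewrite (block_swap k_gt0 (Ordinal lt_ik)).
  apply: (small_block_lt k_gt0 k_le_n A_pos lab_opt lab_lexmin) => j.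
  by rewrite -(ltn_qval A_sorted) -(block_swap k_gt0 (Ordinal lt_ik)); apply: small.
rewrite ltnS leqNgt (ltn_qval A_sorted) -ltnNge => large_j.
exists (s (lab j)) => //; rewrite block_swap tpermK.
exact: (large_singleton k_gt0 k_le_n A_pos lab_lexmin).
Qed.
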